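(* Let $f:M\to\mathbb{R}^3$ be an immersion with eq\''uiaffine transversal vector field $\xi$ and positive definite induced bilinear form $h$, let $(u,v)$ be isothermal coordinates centered at an umbilical point $(0,0)$ with $\lambda_0=b_{11}(0,0)=b_{22}(0,0)\neq0$, and set $q_0=f(0,0)+\lambda_0^{-1}\xi(0,0)$. Let $\nu$ be the co-normal, $p=\nu\cdot(f-q_0)$ the support function, $\mathcal{P}=(p_{uu}-p_{vv},\,2p_{uv})$ and $\mathcal{B}=(b_{11}-b_{22},\,2b_{12})$. Then $$J_1\mathcal{P}(0,0)=\lambda_0^{-1}\delta_0\,J_1\mathcal{B}(0,0),$$ where $J_1$ denotes the $1$-jet at $(0,0)$ and $\delta_0=\delta(0,0)$ with $\delta=[f_u,f_v,\xi][\nu,\nu_u,\nu_v]/\rho$.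
   Context: $D$ is the flat connection of $\mathbb{R}^3$; $h$ and the shape operator $B$ are defined by $D_Xf_*Y=f_*(\nabla_XY)+h(X,Y)\xi$, $D_X\xi=-f_*(BX)+\tau(X)\xi$, eq\''uiaffine meaning $\tau=0$. Isothermal coordinates: $h(\partial_u,\partial_u)=h(\partial_v,\partial_v)=\rho$, $h(\partial_u,\partial_v)=0$. The matrix of $B$ is given by $\xi_u=-b_{11}f_u-b_{21}f_v$, $\xi_v=-b_{12}f_u-b_{22}f_v$ (with $b_{12}=b_{21}$). Umbilical: $B$ a multiple of the identity. The co-normal $\nu$ is defined by $\nu\cdot f_u=\nu\cdot f_v=0$, $\nu\cdot\xi=1$. $[a,b,c]$ is the determinant of three vectors. *)

From Stdlib Require Import Reals.
From Coquelicot Require Import Coquelicot.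
Open Scope R_scope.

Definition V3 := (R * R * R)%type.
Definition c1 (a : V3) : R := fst (fst a).
Definition c2 (a : V3) : R := snd (fst a).
Definition c3 (a : V3) : R := snd a.
Definition vadd (a b : V3) : V3 := (c1 a + c1 b, c2 a + c2 b, c3 a + c3 b).
Definition vscal (k : R) (a : V3) : V3 := (k * c1 a, k * c2 a, k * c3 a).
Definition vsub (a b : V3) : V3 := vadd a (vscal (-1) b).
Definition dot (a b : V3) : R := c1 a * c1 b + c2 a * c2 b + c3 a * c3 b.
Definition cross (a b : V3) : V3 :=
  (c2 a * c3 b - c3 a * c2 b, c3 a * c1 b - c1 a * c3 b, c1 a * c2 b - c2 a * c1 b).
Definition det3 (a b c : V3) : R := dot a (cross b c).

Definition pu (g : R -> R -> R) (u v : R) : R := Derive (fun t => g t v) u.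
Definition pv (g : R -> R -> R) (u v : R) : R := Derive (fun t => g u t) v.
Definition Pu (F : R -> R -> V3) (u v : R) : V3 :=
  (pu (fun a b => c1 (F a b)) u v, pu (fun a b => c2 (F a b)) u v,
   pu (fun a b => c3 (F a b)) u v).
Definition Pv (F : R -> R -> V3) (u v : R) : V3 :=
  (pv (fun a b => c1 (F a b)) u v, pv (fun a b => c2 (F a b)) u v,
   pv (fun a b => c3 (F a b)) u v).

Fixpoint Ck (k : nat) (g : R -> R -> R) (U : R * R -> Prop) : Prop :=
  (forall z, U z -> continuous (fun w : R * R => g (fst w) (snd w)) z) /\
  match k with
  | O => True
  | S k' =>
      (forall z, U z -> ex_derive (fun t => g t (snd z)) (fst z) /\
                        ex_derive (fun t => g (fst z) t) (snd z)) /\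
      Ck k' (pu g) U /\ Ck k' (pv g) U
  end.
Definition smooth_on (g : R -> R -> R) (U : R * R -> Prop) : Prop :=
  forall k, Ck k g U.
Definition smooth3_on (F : R -> R -> V3) (U : R * R -> Prop) : Prop :=
  smooth_on (fun a b => c1 (F a b)) U /\ smooth_on (fun a b => c2 (F a b)) U /\
  smooth_on (fun a b => c3 (F a b)) U.

(* At an umbilical point the shape operator is [lambda0] times the identity, so the
   Weingarten formulas give [d xi = - lambda0 df] there: [f - q0] and [- xi / lambda0] agree
   to first order, and for every vector field [X] the 1-jet of [X.(f - q0)] is [-1/lambda0]
   times that of [X.xi].
   Differentiating the co-normal equations gives [nu_i.f_j = - rho delta_ij], [nu_i.xi = 0]
   and [nu_ij.xi = - b_ij rho], hence [p_ij = nu_ij.(f - q0) - rho delta_ij] for the support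
   function. So [P = X.(f - q0)] with [X = (nu_uu - nu_vv, 2 nu_uv)] and [X.xi = - rho B];
   as [B] vanishes at the umbilical point, the 1-jet of [rho B] there is [rho0] times that
   of [B]. Finally [[f_u, f_v, xi] [nu, nu_u, nu_v]] is the Gram determinant of these two
   frames, which is [rho^2], so [delta = rho]. *)

From Stdlib Require Import Reals Lra.
From Coquelicot Require Import Coquelicot.
Open Scope R_scope.

Definition eq_on (U : R * R -> Prop) (g h : R -> R -> R) : Prop :=
  forall u v, U (u, v) -> g u v = h u v.

(** * Smooth functions on an open set *)

Section CkClosure.

Variable U : R * R -> Prop.
Hypothesis HU : open U.

Lemma open_locally_2d u v : U (u, v) -> locally_2d (fun a b => U (a, b)) u v.
Proof.
  intros H. apply locally_2d_locally.
  apply (filter_imp U); [now intros [a b] | now apply HU].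
Qed.

Lemma eq_on_locally_u g h u v :
  eq_on U g h -> U (u, v) -> locally u (fun t => g t v = h t v).
Proof.
  intros E H.
  apply (filter_imp (fun t => U (t, v))); [intros t Ht; exact (E t v Ht) |].
  exact (locally_2d_1d_const_y _ u v (open_locally_2d u v H)).
Qed.

Lemma eq_on_locally_v g h u v :
  eq_on U g h -> U (u, v) -> locally v (fun t => g u t = h u t).
Proof.
  intros E H.
  apply (filter_imp (fun t => U (u, t))); [intros t Ht; exact (E u t Ht) |].
  exact (locally_2d_1d_const_x _ u v (open_locally_2d u v H)).
Qed.

Lemma pu_ext_on g h u v : eq_on U g h -> U (u, v) -> pu g u v = pu h u v.
Proof. intros E H. unfold pu. apply Derive_ext_loc. now apply eq_on_locally_u. Qed.

Lemma pv_ext_on g h u v : eq_on U g h -> U (u, v) -> pv g u v = pv h u v.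
Proof. intros E H. unfold pv. apply Derive_ext_loc. now apply eq_on_locally_v. Qed.

Lemma continuous_ext_on g h z : eq_on U g h -> U z ->
  continuous (fun w => g (fst w) (snd w)) z -> continuous (fun w => h (fst w) (snd w)) z.
Proof.
  intros E Hz. apply continuous_ext_loc.
  apply (filter_imp U); [intros [a b] H; exact (E a b H) | now apply HU].
Qed.

Lemma Ck_continuous k g z : Ck k g U -> U z -> continuous (fun w => g (fst w) (snd w)) z.
Proof. destruct k; intros [Hc _]; auto. Qed.

Lemma Ck_S_ex_derive_u k g u v : Ck (S k) g U -> U (u, v) -> ex_derive (fun t => g t v) u.
Proof. intros [_ [D _]] H. exact (proj1 (D (u, v) H)). Qed.

Lemma Ck_S_ex_derive_v k g u v : Ck (S k) g U -> U (u, v) -> ex_derive (fun t => g u t) v.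
Proof. intros [_ [D _]] H. exact (proj2 (D (u, v) H)). Qed.

Lemma Ck_S_weaken k g : Ck (S k) g U -> Ck k g U.
Proof.
  revert g; induction k as [|k IH]; intros g [Hc [D [Hu Hv]]].
  - now split.
  - split; [exact Hc | split; [exact D | split; now apply IH]].
Qed.

Lemma Ck_ext k : forall g h, eq_on U g h -> Ck k g U -> Ck k h U.
Proof.
  induction k as [|k IH]; intros g h E [Hc Hk];
    (split; [intros z Hz; exact (continuous_ext_on g h z E Hz (Hc z Hz)) |]).
  - exact I.
  - destruct Hk as [D [Hu Hv]]. split; [|split].
    + intros [u v] H; destruct (D (u, v) H) as [Du Dv]; split.
      * exact (ex_derive_ext_loc _ _ u (eq_on_locally_u g h u v E H) Du).
      * exact (ex_derive_ext_loc _ _ v (eq_on_locally_v g h u v E H) Dv).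
    + exact (IH _ _ (fun u v H => pu_ext_on g h u v E H) Hu).
    + exact (IH _ _ (fun u v H => pv_ext_on g h u v E H) Hv).
Qed.

Lemma Ck_const k c : Ck k (fun _ _ => c) U.
Proof.
  revert c; induction k as [|k IH]; intros c; (split; [intros; apply continuous_const |]).
  - exact I.
  - split; [intros z _; split; apply ex_derive_const |].
    split; apply (Ck_ext k (fun _ _ => 0)); trivial; intros u v _;
      symmetry; [exact (Derive_const c u) | exact (Derive_const c v)].
Qed.

Lemma Ck_plus k : forall g h, Ck k g U -> Ck k h U -> Ck k (fun u v => g u v + h u v) U.
Proof.
  induction k as [|k IH]; intros g h Hg Hh;
    (split; [intros z Hz;
             apply (continuous_plus (fun w => g (fst w) (snd w)) (fun w => h (fst w) (snd w)));
             eapply Ck_continuous; eauto |]).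
  - exact I.
  - split; [|split].
    + intros [u v] H; split.
      * apply (ex_derive_plus (fun t => g t v) (fun t => h t v));
          eauto using Ck_S_ex_derive_u.
      * apply (ex_derive_plus (fun t => g u t) (fun t => h u t));
          eauto using Ck_S_ex_derive_v.
    + apply (Ck_ext k (fun a b => pu g a b + pu h a b)).
      * intros u v H. symmetry. unfold pu.
        apply (Derive_plus (fun t => g t v) (fun t => h t v));
          eauto using Ck_S_ex_derive_u.
      * apply IH; [apply Hg | apply Hh].
    + apply (Ck_ext k (fun a b => pv g a b + pv h a b)).
      * intros u v H. symmetry. unfold pv.
        apply (Derive_plus (fun t => g u t) (fun t => h u t));
          eauto using Ck_S_ex_derive_v.
      * apply IH; [apply Hg | apply Hh].
Qed.

Lemma Ck_mult k : forall g h, Ck k g U -> Ck k h U -> Ck k (fun u v => g u v * h u v) U.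
Proof.
  induction k as [|k IH]; intros g h Hg Hh;
    (split; [intros z Hz;
             apply (continuous_mult (fun w => g (fst w) (snd w)) (fun w => h (fst w) (snd w)));
             eapply Ck_continuous; eauto |]).
  - exact I.
  - split; [|split].
    + intros [u v] H; simpl; split; apply ex_derive_mult;
        eauto using Ck_S_ex_derive_u, Ck_S_ex_derive_v.
    + apply (Ck_ext k (fun a b => pu g a b * h a b + g a b * pu h a b)).
      * intros u v H. symmetry. unfold pu.
        apply (Derive_mult (fun t => g t v) (fun t => h t v));
          eauto using Ck_S_ex_derive_u.
      * apply Ck_plus; apply IH; auto using Ck_S_weaken; [apply Hg | apply Hh].
    + apply (Ck_ext k (fun a b => pv g a b * h a b + g a b * pv h a b)).
      * intros u v H. symmetry. unfold pv.
        apply (Derive_mult (fun t => g u t) (fun t => h u t));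
          eauto using Ck_S_ex_derive_v.
      * apply Ck_plus; apply IH; auto using Ck_S_weaken; [apply Hg | apply Hh].
Qed.

Lemma Ck_inv k : forall g, Ck k g U -> (forall u v, U (u, v) -> g u v <> 0) ->
  Ck k (fun u v => / g u v) U.
Proof.
  induction k as [|k IH]; intros g Hg Hg0;
    (split; [intros [u v] H; apply (continuous_comp (fun w => g (fst w) (snd w)) Rinv);
             [exact (Ck_continuous _ _ _ Hg H) | apply continuous_Rinv, Hg0, H] |]).
  - exact I.
  - split; [|split].
    + intros [u v] H; simpl; split; apply ex_derive_inv;
        eauto using Ck_S_ex_derive_u, Ck_S_ex_derive_v.
    + apply (Ck_ext k (fun a b => pu g a b * (-1 * (/ g a b * / g a b)))).
      * intros u v H. unfold pu.
        rewrite (Derive_inv (fun t => g t v)) by eauto using Ck_S_ex_derive_u.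
        field. now apply Hg0.
      * apply Ck_mult; [apply Hg | apply Ck_mult; [apply Ck_const |]].
        apply Ck_mult; apply IH; auto using Ck_S_weaken.
    + apply (Ck_ext k (fun a b => pv g a b * (-1 * (/ g a b * / g a b)))).
      * intros u v H. unfold pv.
        rewrite (Derive_inv (fun t => g u t)) by eauto using Ck_S_ex_derive_v.
        field. now apply Hg0.
      * apply Ck_mult; [apply Hg | apply Ck_mult; [apply Ck_const |]].
        apply Ck_mult; apply IH; auto using Ck_S_weaken.
Qed.

End CkClosure.

Section SmoothClosure.

Variable U : R * R -> Prop.
Hypothesis HU : open U.

Lemma smooth_on_ext g h : eq_on U g h -> smooth_on g U -> smooth_on h U.
Proof. intros E Hg k. exact (Ck_ext U HU k g h E (Hg k)). Qed.

Lemma smooth_on_pu g : smooth_on g U -> smooth_on (pu g) U.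
Proof. intros Hg k. apply (Hg (S k)). Qed.

Lemma smooth_on_pv g : smooth_on g U -> smooth_on (pv g) U.
Proof. intros Hg k. apply (Hg (S k)). Qed.

Lemma smooth_on_const c : smooth_on (fun _ _ => c) U.
Proof. intros k. now apply Ck_const. Qed.

Lemma smooth_on_plus g h : smooth_on g U -> smooth_on h U ->
  smooth_on (fun u v => g u v + h u v) U.
Proof. intros Hg Hh k. now apply Ck_plus. Qed.

Lemma smooth_on_mult g h : smooth_on g U -> smooth_on h U ->
  smooth_on (fun u v => g u v * h u v) U.
Proof. intros Hg Hh k. now apply Ck_mult. Qed.

Lemma smooth_on_opp g : smooth_on g U -> smooth_on (fun u v => - g u v) U.
Proof.
  intros Hg. apply (smooth_on_ext (fun u v => -1 * g u v)).
  - intros u v _. ring.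
  - apply smooth_on_mult; auto using smooth_on_const.
Qed.

Lemma smooth_on_minus g h : smooth_on g U -> smooth_on h U ->
  smooth_on (fun u v => g u v - h u v) U.
Proof. intros Hg Hh. apply smooth_on_plus; auto using smooth_on_opp. Qed.

Lemma smooth_on_inv g : smooth_on g U -> (forall u v, U (u, v) -> g u v <> 0) ->
  smooth_on (fun u v => / g u v) U.
Proof. intros Hg Hg0 k. now apply Ck_inv. Qed.

Lemma smooth_on_factor g r h : smooth_on h U -> smooth_on r U ->
  (forall u v, U (u, v) -> r u v <> 0) -> eq_on U h (fun u v => g u v * r u v) ->
  smooth_on g U.
Proof.
  intros Hh Hr Hr0 E. apply (smooth_on_ext (fun u v => h u v * / r u v)).
  - intros u v H. rewrite (E u v H). field. now apply Hr0.
  - apply smooth_on_mult; [exact Hh |]. now apply smooth_on_inv.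
Qed.

Lemma smooth_on_ex_derive_u g u v : smooth_on g U -> U (u, v) -> ex_derive (fun t => g t v) u.
Proof. intros Hg. exact (Ck_S_ex_derive_u U 0 g u v (Hg 1%nat)). Qed.

Lemma smooth_on_ex_derive_v g u v : smooth_on g U -> U (u, v) -> ex_derive (fun t => g u t) v.
Proof. intros Hg. exact (Ck_S_ex_derive_v U 0 g u v (Hg 1%nat)). Qed.

Lemma smooth_on_schwarz g u v : smooth_on g U -> U (u, v) -> pu (pv g) u v = pv (pu g) u v.
Proof.
  intros Hg H.
  assert (Hcont : forall h, smooth_on h U -> continuity_2d_pt h u v).
  { intros h Hh eps. apply locally_2d_locally.
    apply (Ck_continuous U 0 h (u, v) (Hh 0%nat) H (fun r => Rabs (r - h u v) < eps)).
    now exists eps. }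
  apply Schwarz.
  - apply (locally_2d_impl (fun a b => U (a, b))).
    + apply locally_2d_forall. intros a b Hab.
      split; [|split; [|split]].
      * now apply smooth_on_ex_derive_u.
      * now apply smooth_on_ex_derive_v.
      * apply (smooth_on_ex_derive_u (pv g)); auto using smooth_on_pv.
      * apply (smooth_on_ex_derive_v (pu g)); auto using smooth_on_pu.
    + exact (open_locally_2d U HU u v H).
  - apply Hcont, smooth_on_pu, smooth_on_pv, Hg.
  - apply Hcont, smooth_on_pv, smooth_on_pu, Hg.
Qed.

End SmoothClosure.

(** * Vector algebra and calculus in R^3 *)

Ltac v3_destruct := repeat match goal with x : V3 |- _ => destruct x as [[? ?] ?] end.
Ltac v3_unfold := unfold det3, dot, cross, vsub, vadd, vscal, c1, c2, c3; simpl.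

Lemma dot_vscal_l k x y : dot (vscal k x) y = k * dot x y.
Proof. v3_destruct; v3_unfold; ring. Qed.

Lemma dot_vscal_r x k y : dot x (vscal k y) = k * dot x y.
Proof. v3_destruct; v3_unfold; ring. Qed.

Lemma dot_vsub_l x y z : dot (vsub x y) z = dot x z - dot y z.
Proof. v3_destruct; v3_unfold; ring. Qed.

Lemma dot_vadd_vscal2 n x y a b :
  dot n (vadd (vscal a x) (vscal b y)) = a * dot n x + b * dot n y.
Proof. v3_destruct; v3_unfold; ring. Qed.

Lemma dot_vadd_vscal3 n x y z a b r :
  dot n (vadd (vadd (vscal a x) (vscal b y)) (vscal r z)) =
  a * dot n x + b * dot n y + r * dot n z.
Proof. v3_destruct; v3_unfold; ring. Qed.

Lemma dot_vsub_vadd x p k w : dot x (vsub p (vadd p (vscal k w))) = - k * dot x w.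
Proof. v3_destruct; v3_unfold; ring. Qed.

Lemma det3_vscal_expand n a b c :
  vscal (det3 a b c) n =
  vadd (vadd (vscal (dot n a) (cross b c)) (vscal (dot n b) (cross c a)))
       (vscal (dot n c) (cross a b)).
Proof. v3_destruct; v3_unfold; f_equal; [f_equal |]; ring. Qed.

Lemma det3_mul_gram a b c x y z :
  det3 a b c * det3 x y z =
  dot x a * (dot y b * dot z c - dot y c * dot z b)
  - dot x b * (dot y a * dot z c - dot y c * dot z a)
  + dot x c * (dot y a * dot z b - dot y b * dot z a).
Proof. v3_destruct; v3_unfold; ring. Qed.

Lemma dual_vector_eq_cross n a b c :
  dot n a = 0 -> dot n b = 0 -> dot n c = 1 -> det3 a b c <> 0 ->
  n = vscal (/ det3 a b c) (cross a b).
Proof.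
  intros Ha Hb Hc HD.
  assert (E : vscal (det3 a b c) n = cross a b).
  { rewrite det3_vscal_expand, Ha, Hb, Hc. v3_destruct; v3_unfold; f_equal; [f_equal |]; ring. }
  rewrite <- E. v3_destruct; v3_unfold; f_equal; [f_equal |]; field; exact HD.
Qed.

Definition ex_derive3 (a : R -> V3) (x : R) : Prop :=
  ex_derive (fun t => c1 (a t)) x /\ ex_derive (fun t => c2 (a t)) x /\
  ex_derive (fun t => c3 (a t)) x.

Definition Derive3 (a : R -> V3) (x : R) : V3 :=
  (Derive (fun t => c1 (a t)) x, Derive (fun t => c2 (a t)) x, Derive (fun t => c3 (a t)) x).

Lemma Derive_dot a b x : ex_derive3 a x -> ex_derive3 b x ->
  Derive (fun t => dot (a t) (b t)) x = dot (Derive3 a x) (b x) + dot (a x) (Derive3 b x).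
Proof.
  intros [A1 [A2 A3]] [B1 [B2 B3]]. unfold dot.
  rewrite (Derive_plus (fun t => c1 (a t) * c1 (b t) + c2 (a t) * c2 (b t))),
    (Derive_plus (fun t => c1 (a t) * c1 (b t))), !Derive_mult
    by auto using ex_derive_mult, ex_derive_plus.
  unfold Derive3, c1, c2, c3; simpl. ring.
Qed.

Lemma Derive_plus_const g k x : ex_derive g x -> Derive (fun t => g t + k) x = Derive g x.
Proof.
  intros Hg. rewrite (Derive_plus g (fun _ => k)) by auto using ex_derive_const.
  rewrite Derive_const. apply Rplus_0_r.
Qed.

Lemma Derive3_sub_const a q x :
  ex_derive3 a x -> Derive3 (fun t => vsub (a t) q) x = Derive3 a x.
Proof.
  intros [A1 [A2 A3]]. unfold Derive3. f_equal; [f_equal |].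
  - exact (Derive_plus_const _ (-1 * c1 q) x A1).
  - exact (Derive_plus_const _ (-1 * c2 q) x A2).
  - exact (Derive_plus_const _ (-1 * c3 q) x A3).
Qed.

Section SmoothVectorFields.

Variable U : R * R -> Prop.
Hypothesis HU : open U.

Lemma smooth3_on_ext A B : (forall u v, U (u, v) -> A u v = B u v) ->
  smooth3_on A U -> smooth3_on B U.
Proof.
  intros E [A1 [A2 A3]]. split; [|split].
  - exact (smooth_on_ext U HU _ _ (fun u v H => f_equal c1 (E u v H)) A1).
  - exact (smooth_on_ext U HU _ _ (fun u v H => f_equal c2 (E u v H)) A2).
  - exact (smooth_on_ext U HU _ _ (fun u v H => f_equal c3 (E u v H)) A3).
Qed.

Lemma smooth3_on_Pu A : smooth3_on A U -> smooth3_on (Pu A) U.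
Proof. intros [A1 [A2 A3]]. split; [|split]; now apply smooth_on_pu. Qed.

Lemma smooth3_on_Pv A : smooth3_on A U -> smooth3_on (Pv A) U.
Proof. intros [A1 [A2 A3]]. split; [|split]; now apply smooth_on_pv. Qed.

Lemma smooth_on_dot A B : smooth3_on A U -> smooth3_on B U ->
  smooth_on (fun u v => dot (A u v) (B u v)) U.
Proof.
  intros [A1 [A2 A3]] [B1 [B2 B3]]. unfold dot.
  repeat apply smooth_on_plus; auto; apply smooth_on_mult; auto.
Qed.

Lemma smooth3_on_cross A B : smooth3_on A U -> smooth3_on B U ->
  smooth3_on (fun u v => cross (A u v) (B u v)) U.
Proof.
  intros [A1 [A2 A3]] [B1 [B2 B3]].
  split; [|split]; apply smooth_on_minus; auto; apply smooth_on_mult; auto.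
Qed.

Lemma smooth3_on_vscal g A : smooth_on g U -> smooth3_on A U ->
  smooth3_on (fun u v => vscal (g u v) (A u v)) U.
Proof. intros Hg [A1 [A2 A3]]. split; [|split]; now apply smooth_on_mult. Qed.

Lemma smooth3_on_vsub A B : smooth3_on A U -> smooth3_on B U ->
  smooth3_on (fun u v => vsub (A u v) (B u v)) U.
Proof.
  intros [A1 [A2 A3]] [B1 [B2 B3]].
  split; [|split]; apply smooth_on_plus; auto; apply smooth_on_mult; auto using smooth_on_const.
Qed.

Lemma smooth3_on_const q : smooth3_on (fun _ _ => q) U.
Proof. unfold smooth3_on. split; [|split]; apply smooth_on_const, HU. Qed.

Lemma smooth3_on_ex_derive3_u A u v : smooth3_on A U -> U (u, v) ->
  ex_derive3 (fun t => A t v) u.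
Proof.
  intros [A1 [A2 A3]] H. split; [|split].
  - exact (smooth_on_ex_derive_u U _ u v A1 H).
  - exact (smooth_on_ex_derive_u U _ u v A2 H).
  - exact (smooth_on_ex_derive_u U _ u v A3 H).
Qed.

Lemma smooth3_on_ex_derive3_v A u v : smooth3_on A U -> U (u, v) ->
  ex_derive3 (fun t => A u t) v.
Proof.
  intros [A1 [A2 A3]] H. split; [|split].
  - exact (smooth_on_ex_derive_v U _ u v A1 H).
  - exact (smooth_on_ex_derive_v U _ u v A2 H).
  - exact (smooth_on_ex_derive_v U _ u v A3 H).
Qed.

Lemma pu_dot A B u v : smooth3_on A U -> smooth3_on B U -> U (u, v) ->
  pu (fun a b => dot (A a b) (B a b)) u v = dot (Pu A u v) (B u v) + dot (A u v) (Pu B u v).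
Proof.
  intros HA HB H.
  exact (Derive_dot (fun t => A t v) (fun t => B t v) u
           (smooth3_on_ex_derive3_u A u v HA H) (smooth3_on_ex_derive3_u B u v HB H)).
Qed.

Lemma pv_dot A B u v : smooth3_on A U -> smooth3_on B U -> U (u, v) ->
  pv (fun a b => dot (A a b) (B a b)) u v = dot (Pv A u v) (B u v) + dot (A u v) (Pv B u v).
Proof.
  intros HA HB H.
  exact (Derive_dot (fun t => A u t) (fun t => B u t) v
           (smooth3_on_ex_derive3_v A u v HA H) (smooth3_on_ex_derive3_v B u v HB H)).
Qed.

Lemma Pu_vsub_const A q u v : smooth3_on A U -> U (u, v) ->
  Pu (fun a b => vsub (A a b) q) u v = Pu A u v.
Proof.
  intros HA H.
  exact (Derive3_sub_const (fun t => A t v) q u (smooth3_on_ex_derive3_u A u v HA H)).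
Qed.

Lemma Pv_vsub_const A q u v : smooth3_on A U -> U (u, v) ->
  Pv (fun a b => vsub (A a b) q) u v = Pv A u v.
Proof.
  intros HA H.
  exact (Derive3_sub_const (fun t => A u t) q v (smooth3_on_ex_derive3_v A u v HA H)).
Qed.

Lemma pu_dot_const_on A B k u v : smooth3_on A U -> smooth3_on B U ->
  eq_on U (fun a b => dot (A a b) (B a b)) (fun _ _ => k) -> U (u, v) ->
  dot (Pu A u v) (B u v) + dot (A u v) (Pu B u v) = 0.
Proof.
  intros HA HB E H. rewrite <- pu_dot by assumption.
  rewrite (pu_ext_on U HU _ _ u v E H). exact (Derive_const k u).
Qed.

Lemma pv_dot_const_on A B k u v : smooth3_on A U -> smooth3_on B U ->
  eq_on U (fun a b => dot (A a b) (B a b)) (fun _ _ => k) -> U (u, v) ->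
  dot (Pv A u v) (B u v) + dot (A u v) (Pv B u v) = 0.
Proof.
  intros HA HB E H. rewrite <- pv_dot by assumption.
  rewrite (pv_ext_on U HU _ _ u v E H). exact (Derive_const k v).
Qed.

Lemma Pu_Pv_comm A u v : smooth3_on A U -> U (u, v) -> Pu (Pv A) u v = Pv (Pu A) u v.
Proof.
  intros [A1 [A2 A3]] H. unfold Pu at 1, Pv at 2.
  change ((pu (pv (fun a b => c1 (A a b))) u v, pu (pv (fun a b => c2 (A a b))) u v,
           pu (pv (fun a b => c3 (A a b))) u v) =
          (pv (pu (fun a b => c1 (A a b))) u v, pv (pu (fun a b => c2 (A a b))) u v,
           pv (pu (fun a b => c3 (A a b))) u v)).
  now rewrite (smooth_on_schwarz U HU _ u v A1 H), (smooth_on_schwarz U HU _ u v A2 H),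
    (smooth_on_schwarz U HU _ u v A3 H).
Qed.

End SmoothVectorFields.

(** * First-order jets *)

Definition jet1_scaled (k : R) (g h : R -> R -> R) (u v : R) : Prop :=
  g u v = k * h u v /\ pu g u v = k * pu h u v /\ pv g u v = k * pv h u v.

Lemma jet1_scaled_comp k1 k2 g h w u v :
  jet1_scaled k1 g h u v -> jet1_scaled k2 h w u v -> jet1_scaled (k1 * k2) g w u v.
Proof.
  intros [E0 [Eu Ev]] [F0 [Fu Fv]]. unfold jet1_scaled.
  rewrite E0, Eu, Ev, F0, Fu, Fv. split; [|split]; ring.
Qed.

Lemma jet1_scaled_ext U k g g' h u v : open U -> eq_on U g' g -> U (u, v) ->
  jet1_scaled k g h u v -> jet1_scaled k g' h u v.
Proof.
  intros HU E H [E0 [Eu Ev]]. split; [|split].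
  - now rewrite (E u v H).
  - now rewrite (pu_ext_on U HU g' g u v E H).
  - now rewrite (pv_ext_on U HU g' g u v E H).
Qed.

Lemma jet1_scaled_mul_root U g r u v : smooth_on g U -> smooth_on r U -> U (u, v) ->
  g u v = 0 -> jet1_scaled (r u v) (fun a b => g a b * r a b) g u v.
Proof.
  intros Hg Hr H Hg0. split; [|split].
  - ring.
  - unfold pu. rewrite (Derive_mult (fun t => g t v) (fun t => r t v))
      by first [exact (smooth_on_ex_derive_u U g u v Hg H)
               | exact (smooth_on_ex_derive_u U r u v Hr H)].
    rewrite Hg0. ring.
  - unfold pv. rewrite (Derive_mult (fun t => g u t) (fun t => r u t))
      by first [exact (smooth_on_ex_derive_v U g u v Hg H)
               | exact (smooth_on_ex_derive_v U r u v Hr H)].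
    rewrite Hg0. ring.
Qed.

Lemma umbilic_contact_jet U (f xi X : R -> R -> V3) u0 v0 lam :
  open U -> smooth3_on f U -> smooth3_on xi U -> smooth3_on X U -> U (u0, v0) -> lam <> 0 ->
  Pu xi u0 v0 = vscal (- lam) (Pu f u0 v0) -> Pv xi u0 v0 = vscal (- lam) (Pv f u0 v0) ->
  jet1_scaled (- / lam)
    (fun a b => dot (X a b) (vsub (f a b) (vadd (f u0 v0) (vscal (/ lam) (xi u0 v0)))))
    (fun a b => dot (X a b) (xi a b)) u0 v0.
Proof.
  intros HU Hf Hxi HX H0 Hlam Hu Hv.
  set (q := vadd (f u0 v0) (vscal (/ lam) (xi u0 v0))).
  assert (Hfq : smooth3_on (fun a b => vsub (f a b) q) U).
  { exact (smooth3_on_vsub U HU f (fun _ _ => q) Hf (smooth3_on_const U HU q)). }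
  assert (Hq : forall Y, dot Y (vsub (f u0 v0) q) = - / lam * dot Y (xi u0 v0)).
  { intros Y. apply dot_vsub_vadd. }
  split; [|split].
  - apply Hq.
  - rewrite (pu_dot U X _ u0 v0 HX Hfq H0), (pu_dot U X xi u0 v0 HX Hxi H0),
      (Pu_vsub_const U f q u0 v0 Hf H0), Hq, Hu, dot_vscal_r.
    field. exact Hlam.
  - rewrite (pv_dot U X _ u0 v0 HX Hfq H0), (pv_dot U X xi u0 v0 HX Hxi H0),
      (Pv_vsub_const U f q u0 v0 Hf H0), Hq, Hv, dot_vscal_r.
    field. exact Hlam.
Qed.

(** * The co-normal map and the support function *)

Lemma smooth3_on_conormal (U : R * R -> Prop) (f xi nu : R -> R -> V3) : open U ->
  smooth3_on f U -> smooth3_on xi U ->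
  (forall u v, U (u, v) -> det3 (Pu f u v) (Pv f u v) (xi u v) <> 0) ->
  (forall u v, U (u, v) ->
     dot (nu u v) (Pu f u v) = 0 /\ dot (nu u v) (Pv f u v) = 0 /\ dot (nu u v) (xi u v) = 1) ->
  smooth3_on nu U.
Proof.
  intros HU Hf Hxi Hdet Hnu.
  assert (Hfu := smooth3_on_Pu U f Hf). assert (Hfv := smooth3_on_Pv U f Hf).
  apply (smooth3_on_ext U HU (fun a b =>
           vscal (/ det3 (Pu f a b) (Pv f a b) (xi a b)) (cross (Pu f a b) (Pv f a b)))).
  - intros u v H. destruct (Hnu u v H) as [N1 [N2 N3]].
    symmetry. apply dual_vector_eq_cross; auto.
  - apply smooth3_on_vscal; [exact HU | | exact (smooth3_on_cross U HU _ _ Hfu Hfv)].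
    apply smooth_on_inv; [exact HU | | exact Hdet].
    exact (smooth_on_dot U HU _ (fun a b => cross (Pv f a b) (xi a b)) Hfu
             (smooth3_on_cross U HU _ _ Hfv Hxi)).
Qed.

Definition support_function (nu f : R -> R -> V3) (q : V3) : R -> R -> R :=
  fun u v => dot (nu u v) (vsub (f u v) q).

Section Conormal.

Variables (U : R * R -> Prop) (f xi nu : R -> R -> V3) (rho b11 b12 b21 b22 : R -> R -> R).
Hypothesis HU : open U.
Hypothesis Hf : smooth3_on f U.
Hypothesis Hxi : smooth3_on xi U.
Hypothesis Hnu : smooth3_on nu U.
Hypothesis rho_pos : forall u v, U (u, v) -> 0 < rho u v.
Hypothesis gauss_uu : forall u v, U (u, v) -> exists a b,
  Pu (Pu f) u v = vadd (vadd (vscal a (Pu f u v)) (vscal b (Pv f u v))) (vscal (rho u v) (xi u v)).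
Hypothesis gauss_vv : forall u v, U (u, v) -> exists a b,
  Pv (Pv f) u v = vadd (vadd (vscal a (Pu f u v)) (vscal b (Pv f u v))) (vscal (rho u v) (xi u v)).
Hypothesis gauss_uv : forall u v, U (u, v) -> exists a b,
  Pv (Pu f) u v = vadd (vscal a (Pu f u v)) (vscal b (Pv f u v)).
Hypothesis weingarten_u : forall u v, U (u, v) ->
  Pu xi u v = vadd (vscal (- b11 u v) (Pu f u v)) (vscal (- b21 u v) (Pv f u v)).
Hypothesis weingarten_v : forall u v, U (u, v) ->
  Pv xi u v = vadd (vscal (- b12 u v) (Pu f u v)) (vscal (- b22 u v) (Pv f u v)).
Hypothesis conormal : forall u v, U (u, v) ->
  dot (nu u v) (Pu f u v) = 0 /\ dot (nu u v) (Pv f u v) = 0 /\ dot (nu u v) (xi u v) = 1.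

Let Hfu := smooth3_on_Pu U f Hf.
Let Hfv := smooth3_on_Pv U f Hf.
Let Hnu_u := smooth3_on_Pu U nu Hnu.
Let Hnu_v := smooth3_on_Pv U nu Hnu.

Lemma conormal_u_fu u v : U (u, v) -> dot (Pu nu u v) (Pu f u v) = - rho u v.
Proof.
  intros H. destruct (conormal u v H) as [N1 [N2 N3]].
  assert (E := pu_dot_const_on U HU nu (Pu f) 0 u v Hnu Hfu
                 (fun a b Hab => proj1 (conormal a b Hab)) H).
  destruct (gauss_uu u v H) as [a [b G]].
  rewrite G, dot_vadd_vscal3, N1, N2, N3 in E. lra.
Qed.

Lemma conormal_v_fv u v : U (u, v) -> dot (Pv nu u v) (Pv f u v) = - rho u v.
Proof.
  intros H. destruct (conormal u v H) as [N1 [N2 N3]].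
  assert (E := pv_dot_const_on U HU nu (Pv f) 0 u v Hnu Hfv
                 (fun a b Hab => proj1 (proj2 (conormal a b Hab))) H).
  destruct (gauss_vv u v H) as [a [b G]].
  rewrite G, dot_vadd_vscal3, N1, N2, N3 in E. lra.
Qed.

Lemma conormal_v_fu u v : U (u, v) -> dot (Pv nu u v) (Pu f u v) = 0.
Proof.
  intros H. destruct (conormal u v H) as [N1 [N2 N3]].
  assert (E := pv_dot_const_on U HU nu (Pu f) 0 u v Hnu Hfu
                 (fun a b Hab => proj1 (conormal a b Hab)) H).
  destruct (gauss_uv u v H) as [a [b G]].
  rewrite G, dot_vadd_vscal2, N1, N2 in E. lra.
Qed.

(* The Gauss formula is only assumed for [Pv (Pu f)], hence the symmetry of second derivatives. *)
Lemma conormal_u_fv u v : U (u, v) -> dot (Pu nu u v) (Pv f u v) = 0.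
Proof.
  intros H. destruct (conormal u v H) as [N1 [N2 N3]].
  assert (E := pu_dot_const_on U HU nu (Pv f) 0 u v Hnu Hfv
                 (fun a b Hab => proj1 (proj2 (conormal a b Hab))) H).
  destruct (gauss_uv u v H) as [a [b G]].
  rewrite (Pu_Pv_comm U HU f u v Hf H), G, dot_vadd_vscal2, N1, N2 in E. lra.
Qed.

Lemma conormal_u_xi u v : U (u, v) -> dot (Pu nu u v) (xi u v) = 0.
Proof.
  intros H. destruct (conormal u v H) as [N1 [N2 N3]].
  assert (E := pu_dot_const_on U HU nu xi 1 u v Hnu Hxi
                 (fun a b Hab => proj2 (proj2 (conormal a b Hab))) H).
  rewrite weingarten_u, dot_vadd_vscal2, N1, N2 in E by exact H. lra.
Qed.

Lemma conormal_v_xi u v : U (u, v) -> dot (Pv nu u v) (xi u v) = 0.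
Proof.
  intros H. destruct (conormal u v H) as [N1 [N2 N3]].
  assert (E := pv_dot_const_on U HU nu xi 1 u v Hnu Hxi
                 (fun a b Hab => proj2 (proj2 (conormal a b Hab))) H).
  rewrite weingarten_v, dot_vadd_vscal2, N1, N2 in E by exact H. lra.
Qed.

Lemma conormal_uu_xi u v : U (u, v) -> dot (Pu (Pu nu) u v) (xi u v) = - (b11 u v * rho u v).
Proof.
  intros H.
  assert (E := pu_dot_const_on U HU (Pu nu) xi 0 u v Hnu_u Hxi conormal_u_xi H).
  rewrite weingarten_u, dot_vadd_vscal2, conormal_u_fu, conormal_u_fv in E by exact H. lra.
Qed.

Lemma conormal_vv_xi u v : U (u, v) -> dot (Pv (Pv nu) u v) (xi u v) = - (b22 u v * rho u v).
Proof.
  intros H.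
  assert (E := pv_dot_const_on U HU (Pv nu) xi 0 u v Hnu_v Hxi conormal_v_xi H).
  rewrite weingarten_v, dot_vadd_vscal2, conormal_v_fu, conormal_v_fv in E by exact H. lra.
Qed.

Lemma conormal_uv_xi u v : U (u, v) -> dot (Pv (Pu nu) u v) (xi u v) = - (b12 u v * rho u v).
Proof.
  intros H.
  assert (E := pv_dot_const_on U HU (Pu nu) xi 0 u v Hnu_u Hxi conormal_u_xi H).
  rewrite weingarten_v, dot_vadd_vscal2, conormal_u_fu, conormal_u_fv in E by exact H. lra.
Qed.

Lemma smooth_on_rho : smooth_on rho U.
Proof.
  apply (smooth_on_ext U HU (fun a b => dot (nu a b) (Pu (Pu f) a b))).
  - intros u v H. destruct (gauss_uu u v H) as [a [b G]].
    destruct (conormal u v H) as [N1 [N2 N3]]. rewrite G, dot_vadd_vscal3, N1, N2, N3. ring.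
  - exact (smooth_on_dot U HU nu (Pu (Pu f)) Hnu (smooth3_on_Pu U _ Hfu)).
Qed.

Lemma conormal_delta_eq_rho u v : U (u, v) ->
  det3 (Pu f u v) (Pv f u v) (xi u v) * det3 (nu u v) (Pu nu u v) (Pv nu u v) / rho u v = rho u v.
Proof.
  intros H. assert (Hrho := rho_pos u v H). destruct (conormal u v H) as [N1 [N2 N3]].
  rewrite det3_mul_gram, N1, N2, N3, conormal_u_fu, conormal_u_fv, conormal_u_xi,
    conormal_v_fu, conormal_v_fv, conormal_v_xi by exact H.
  field. lra.
Qed.

Lemma support_pu q : eq_on U (pu (support_function nu f q))
                               (fun a b => dot (Pu nu a b) (vsub (f a b) q)).
Proof.
  intros u v H. unfold support_function.
  rewrite (pu_dot U nu (fun a b => vsub (f a b) q) u v Hnu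
             (smooth3_on_vsub U HU f _ Hf (smooth3_on_const U HU q)) H),
    (Pu_vsub_const U f q u v Hf H), (proj1 (conormal u v H)).
  ring.
Qed.

Lemma support_pv q : eq_on U (pv (support_function nu f q))
                               (fun a b => dot (Pv nu a b) (vsub (f a b) q)).
Proof.
  intros u v H. unfold support_function.
  rewrite (pv_dot U nu (fun a b => vsub (f a b) q) u v Hnu
             (smooth3_on_vsub U HU f _ Hf (smooth3_on_const U HU q)) H),
    (Pv_vsub_const U f q u v Hf H), (proj1 (proj2 (conormal u v H))).
  ring.
Qed.

Section Support.

Variable q : V3.

Let Hfq := smooth3_on_vsub U HU f _ Hf (smooth3_on_const U HU q).

Lemma support_pu_pu u v : U (u, v) ->
  pu (pu (support_function nu f q)) u v = dot (Pu (Pu nu) u v) (vsub (f u v) q) - rho u v.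
Proof.
  intros H.
  rewrite (pu_ext_on U HU _ _ u v (support_pu q) H),
    (pu_dot U (Pu nu) (fun a b => vsub (f a b) q) u v Hnu_u Hfq H),
    (Pu_vsub_const U f q u v Hf H), (conormal_u_fu u v H).
  ring.
Qed.

Lemma support_pv_pv u v : U (u, v) ->
  pv (pv (support_function nu f q)) u v = dot (Pv (Pv nu) u v) (vsub (f u v) q) - rho u v.
Proof.
  intros H.
  rewrite (pv_ext_on U HU _ _ u v (support_pv q) H),
    (pv_dot U (Pv nu) (fun a b => vsub (f a b) q) u v Hnu_v Hfq H),
    (Pv_vsub_const U f q u v Hf H), (conormal_v_fv u v H).
  ring.
Qed.

Lemma support_pv_pu u v : U (u, v) ->
  pv (pu (support_function nu f q)) u v = dot (Pv (Pu nu) u v) (vsub (f u v) q).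
Proof.
  intros H.
  rewrite (pv_ext_on U HU _ _ u v (support_pu q) H),
    (pv_dot U (Pu nu) (fun a b => vsub (f a b) q) u v Hnu_u Hfq H),
    (Pv_vsub_const U f q u v Hf H), (conormal_u_fv u v H).
  ring.
Qed.

End Support.

Section UmbilicPoint.

Variables u0 v0 : R.
Hypothesis H0 : U (u0, v0).
Hypothesis umbilic_b12 : b12 u0 v0 = 0.
Hypothesis umbilic_b21 : b21 u0 v0 = 0.
Hypothesis umbilic_b22 : b11 u0 v0 = b22 u0 v0.
Hypothesis umbilic_nonzero : b11 u0 v0 <> 0.

Let q0 := vadd (f u0 v0) (vscal (/ b11 u0 v0) (xi u0 v0)).

Lemma umbilic_Pu_xi : Pu xi u0 v0 = vscal (- b11 u0 v0) (Pu f u0 v0).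
Proof.
  rewrite weingarten_u, umbilic_b21 by exact H0.
  generalize (Pu f u0 v0) (Pv f u0 v0). intros [[x1 x2] x3] [[y1 y2] y3].
  v3_unfold; f_equal; [f_equal |]; ring.
Qed.

Lemma umbilic_Pv_xi : Pv xi u0 v0 = vscal (- b11 u0 v0) (Pv f u0 v0).
Proof.
  rewrite weingarten_v, umbilic_b12, <- umbilic_b22 by exact H0.
  generalize (Pu f u0 v0) (Pv f u0 v0). intros [[x1 x2] x3] [[y1 y2] y3].
  v3_unfold; f_equal; [f_equal |]; ring.
Qed.

Lemma umbilic_pairing_jet (P B : R -> R -> R) (X : R -> R -> V3) :
  smooth3_on X U -> eq_on U P (fun a b => dot (X a b) (vsub (f a b) q0)) ->
  eq_on U (fun a b => dot (X a b) (xi a b)) (fun a b => B a b * - rho a b) -> B u0 v0 = 0 ->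
  jet1_scaled (/ b11 u0 v0 * rho u0 v0) P B u0 v0.
Proof.
  intros HX EP EB HB0.
  assert (Hr := smooth_on_opp U HU rho smooth_on_rho).
  assert (Hr0 : forall u v, U (u, v) -> - rho u v <> 0).
  { intros u v H. assert (Hrho := rho_pos u v H). lra. }
  assert (HB := smooth_on_factor U HU B _ _ (smooth_on_dot U HU X xi HX Hxi) Hr Hr0 EB).
  assert (Jc := umbilic_contact_jet U f xi X u0 v0 (b11 u0 v0) HU Hf Hxi HX H0 umbilic_nonzero
                  umbilic_Pu_xi umbilic_Pv_xi).
  assert (Jr := jet1_scaled_mul_root U B _ u0 v0 HB Hr H0 HB0).
  apply (jet1_scaled_ext U _ (fun a b => dot (X a b) (vsub (f a b) q0)) P B u0 v0 HU EP H0).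
  replace (/ b11 u0 v0 * rho u0 v0) with (- / b11 u0 v0 * - rho u0 v0) by ring.
  apply (jet1_scaled_comp _ _ _ (fun a b => dot (X a b) (xi a b))); [exact Jc |].
  exact (jet1_scaled_ext U _ _ _ B u0 v0 HU EB H0 Jr).
Qed.

Lemma support_jet_diag :
  jet1_scaled (/ b11 u0 v0 * rho u0 v0)
    (fun a b => pu (pu (support_function nu f q0)) a b - pv (pv (support_function nu f q0)) a b)
    (fun a b => b11 a b - b22 a b) u0 v0.
Proof.
  apply (umbilic_pairing_jet _ _ (fun a b => vsub (Pu (Pu nu) a b) (Pv (Pv nu) a b))).
  - exact (smooth3_on_vsub U HU _ _ (smooth3_on_Pu U _ Hnu_u) (smooth3_on_Pv U _ Hnu_v)).
  - intros u v H. rewrite support_pu_pu, support_pv_pv, dot_vsub_l by exact H. ring.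
  - intros u v H. rewrite dot_vsub_l, conormal_uu_xi, conormal_vv_xi by exact H. ring.
  - rewrite umbilic_b22. ring.
Qed.

Lemma support_jet_offdiag :
  jet1_scaled (/ b11 u0 v0 * rho u0 v0)
    (fun a b => 2 * pv (pu (support_function nu f q0)) a b)
    (fun a b => 2 * b12 a b) u0 v0.
Proof.
  apply (umbilic_pairing_jet _ _ (fun a b => vscal 2 (Pv (Pu nu) a b))).
  - exact (smooth3_on_vscal U HU _ _ (smooth_on_const U HU 2) (smooth3_on_Pv U _ Hnu_u)).
  - intros u v H. rewrite support_pv_pu, dot_vscal_l by exact H. reflexivity.
  - intros u v H. rewrite dot_vscal_l, conormal_uv_xi by exact H. ring.
  - rewrite umbilic_b12. ring.
Qed.

End UmbilicPoint.

End Conormal.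

Theorem proposition4p2
  (U : R * R -> Prop) (f xi nu : R -> R -> V3)
  (rho b11 b12 b21 b22 : R -> R -> R) :
  (* coordinate domain: open, containing the centre (0,0) *)
  open U -> U (0, 0) ->
  smooth3_on f U -> smooth3_on xi U ->
  (* f is an immersion and xi is transversal *)
  (forall u v, U (u, v) -> cross (Pu f u v) (Pv f u v) <> (0, 0, 0)) ->
  (forall u v, U (u, v) -> det3 (Pu f u v) (Pv f u v) (xi u v) <> 0) ->
  (* h positive definite, isothermal: h11 = h22 = rho > 0, h12 = 0
     (Gauss formula D_X f_* Y = f_*(nabla_X Y) + h(X,Y) xi in coordinates) *)
  (forall u v, U (u, v) -> 0 < rho u v) ->
  (forall u v, U (u, v) -> exists a b,
     Pu (Pu f) u v = vadd (vadd (vscal a (Pu f u v)) (vscal b (Pv f u v)))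
                          (vscal (rho u v) (xi u v))) ->
  (forall u v, U (u, v) -> exists a b,
     Pv (Pv f) u v = vadd (vadd (vscal a (Pu f u v)) (vscal b (Pv f u v)))
                          (vscal (rho u v) (xi u v))) ->
  (forall u v, U (u, v) -> exists a b,
     Pv (Pu f) u v = vadd (vscal a (Pu f u v)) (vscal b (Pv f u v))) ->
  (* equiaffine (tau = 0) with shape operator B = (b_ij) *)
  (forall u v, U (u, v) ->
     Pu xi u v = vadd (vscal (- b11 u v) (Pu f u v)) (vscal (- b21 u v) (Pv f u v))) ->
  (forall u v, U (u, v) ->
     Pv xi u v = vadd (vscal (- b12 u v) (Pu f u v)) (vscal (- b22 u v) (Pv f u v))) ->
  (* co-normal *)
  (forall u v, U (u, v) ->
     dot (nu u v) (Pu f u v) = 0 /\ dot (nu u v) (Pv f u v) = 0 /\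
     dot (nu u v) (xi u v) = 1) ->
  (* (0,0) is umbilical with lambda0 = b11(0,0) = b22(0,0) <> 0 *)
  b12 0 0 = 0 -> b21 0 0 = 0 -> b11 0 0 = b22 0 0 -> b11 0 0 <> 0 ->
  let lam0 := b11 0 0 in
  let q0 := vadd (f 0 0) (vscal (/ lam0) (xi 0 0)) in
  let p := fun u v => dot (nu u v) (vsub (f u v) q0) in
  let P1 := fun u v => pu (pu p) u v - pv (pv p) u v in
  let P2 := fun u v => 2 * pv (pu p) u v in
  let B1 := fun u v => b11 u v - b22 u v in
  let B2 := fun u v => 2 * b12 u v in
  let delta0 := det3 (Pu f 0 0) (Pv f 0 0) (xi 0 0)
                * det3 (nu 0 0) (Pu nu 0 0) (Pv nu 0 0) / rho 0 0 in
  let c := / lam0 * delta0 in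
  (* equality of 1-jets at (0,0): values and first partial derivatives *)
  P1 0 0 = c * B1 0 0 /\ P2 0 0 = c * B2 0 0 /\
  pu P1 0 0 = c * pu B1 0 0 /\ pv P1 0 0 = c * pv B1 0 0 /\
  pu P2 0 0 = c * pu B2 0 0 /\ pv P2 0 0 = c * pv B2 0 0.
Proof.
  intros HU H0 Hf Hxi _ Hdet Hrho Gu Gv Guv Wu Wv Hnu b12_0 b21_0 b11_22 lam_ne
    lam0 q0 p P1 P2 B1 B2 delta0 c.
  assert (Snu := smooth3_on_conormal U f xi nu HU Hf Hxi Hdet Hnu).
  assert (Hc : c = / lam0 * rho 0 0).
  { unfold c, delta0.
    now rewrite (conormal_delta_eq_rho U f xi nu rho b11 b12 b21 b22 HU Hf Hxi Snu Hrho
                   Gu Gv Guv Wu Wv Hnu 0 0 H0). }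
  destruct (support_jet_diag U f xi nu rho b11 b12 b21 b22 HU Hf Hxi Snu Hrho
              Gu Gv Guv Wu Wv Hnu 0 0 H0 b12_0 b21_0 b11_22 lam_ne) as [E0 [Eu Ev]].
  destruct (support_jet_offdiag U f xi nu rho b11 b12 b21 b22 HU Hf Hxi Snu Hrho
              Gu Guv Wu Wv Hnu 0 0 H0 b12_0 b21_0 b11_22 lam_ne) as [F0 [Fu Fv]].
  rewrite Hc.
  exact (conj E0 (conj F0 (conj Eu (conj Ev (conj Fu Fv))))).
Qed.
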